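(* Let $\Gamma$ be a group acting by measure class preserving transformations on a standard probability space $(B,\nu)$ such that the action is strongly almost transitive: for every measurable $A\subset B$ with $\nu(A)>0$ there exist $\gamma_n\in\Gamma$ with $\nu(\gamma_n^{-1}A)\to1$. Let $C$ be a standard Borel space with a measurable $\Gamma$-action, and let $\pi_1,\pi_2:B\to C$ be measurable maps with $\pi_i(\gamma x)=\gamma\pi_i(x)$ for all $\gamma\in\Gamma$ and $\nu$-a.e. $x$. Then either $\pi_1(x)=\pi_2(x)$ for $\nu$-a.e. $x\in B$, or the measures $(\pi_1)_*\nu$ and $(\pi_2)_*\nu$ are mutually singular. *)

From HB Require Import structures.
From mathcomp Require Import all_boot all_order all_algebra.
From mathcomp Require Import all_classical all_reals all_analysis.
Set Implicit Arguments. Unset Strict Implicit. Unset Printing Implicit Defensive.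
Import Order.TTheory GRing.Theory Num.Theory.
Local Open Scope classical_set_scope.
Local Open Scope ring_scope.

Definition is_group (G : Type) (mul : G -> G -> G) (one : G) (inv : G -> G) :=
  [/\ forall x y z, mul x (mul y z) = mul (mul x y) z,
      forall x, mul one x = x, forall x, mul x one = x,
      forall x, mul (inv x) x = one & forall x, mul x (inv x) = one].

Definition is_action (G T : Type) (mul : G -> G -> G) (one : G)
  (act : G -> T -> T) :=
  (forall x, act one x = x) /\ (forall g h x, act (mul g h) x = act g (act h x)).

Definition measurable_action (G : Type) d (T : measurableType d)
  (act : G -> T -> T) := forall g, measurable_fun [set: T] (act g).

Definition measure_class_preserving (G : Type) d (T : measurableType d)
  (R : realType) (nu : set T -> \bar R) (act : G -> T -> T) :=
  forall g (A : set T), measurable A ->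
    (nu A = 0%E <-> nu (act g @^-1` A) = 0%E).

(* Strong almost transitivity: for every measurable A of positive measure there
   are gamma_n with nu (gamma_n^{-1} A) -> 1 ; gamma_n^{-1} A is the preimage
   of A under the action of gamma_n. *)
Definition strongly_almost_transitive (G : Type) d (T : measurableType d)
  (R : realType) (nu : set T -> \bar R) (act : G -> T -> T) :=
  forall A : set T, measurable A -> (0 < nu A)%E ->
    exists u : nat -> G,
      (fun n => nu (act (u n) @^-1` A)) @ \oo --> 1%E.

(* Standard Borel space: Borel isomorphic to a Borel subset of the real line
   (Kuratowski); measurable sets of R are the Borel sets. *)
Definition standard_borel (R : realType) d (T : measurableType d) :=
  exists f : T -> R,
    [/\ measurable_fun [set: T] f, injective f, measurable (range f)
      & forall A : set T, measurable A -> measurable (f @` A)].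

Definition mutually_singular d (T : measurableType d) (R : realType)
  (mu1 mu2 : set T -> \bar R) :=
  exists S : set T, [/\ measurable S, mu1 S = 0%E & mu2 (~` S) = 0%E].

From HB Require Import structures.
From mathcomp Require Import all_boot all_order all_algebra.
From mathcomp Require Import all_classical all_reals all_analysis.
Import Order.TTheory GRing.Theory Num.Theory.
Local Open Scope classical_set_scope.
Local Open Scope ring_scope.

(* If [pi1] and [pi2] are not a.e. equal then, since [C] is separated by
   countably many Borel sets, some [A = pi1^-1 U `&` pi2^-1 (~` U)] has positive
   measure.  Strong almost transitivity gives [g] with [nu (g^-1 A) >= 1 - e],
   and equivariance turns this into a Borel set [T = g^-1 U] with
   [(pi1)_* nu (~` T) <= e] and [(pi2)_* nu T <= e].  Taking [e = 2^-(k+1)],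
   Borel--Cantelli makes the separation exact. *)

Lemma measurable_preimageT {d1 d2} {T1 : measurableType d1}
    {T2 : measurableType d2} (f : T1 -> T2) (Y : set T2) :
  measurable_fun [set: T1] f -> measurable Y -> measurable (f @^-1` Y).
Proof. by move=> mf mY; rewrite -[_ @^-1` _]setTI; exact: mf. Qed.

Lemma setC_lim_sup_setC {T} (F : (set T)^nat) :
  ~` lim_sup_set (fun k => ~` F k) `<=` lim_sup_set F.
Proof.
move=> x notS m _; apply: contrapT => notF; apply: notS => n _.
exists (maxn m n); first by rewrite /= leq_maxr.
by move=> Fx; apply: notF; exists (maxn m n); rewrite /= ?leq_maxl.
Qed.

Lemma measurable_lim_sup_set {d} {T : measurableType d} (F : (set T)^nat) :
  (forall k, measurable (F k)) -> measurable (lim_sup_set F).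
Proof.
by move=> mF; apply: bigcapT_measurable => n; exact: bigcup_measurable.
Qed.

Definition approx_singular {d} {C : measurableType d} {R : realType}
    (mu1 mu2 : set C -> \bar R) :=
  forall e : R, 0 < e ->
    exists T, [/\ measurable T, (mu1 (~` T) <= e%:E)%E & (mu2 T <= e%:E)%E].

Definition separating {T} (U : (set T)^nat) :=
  forall c1 c2, c1 <> c2 -> exists n, U n c1 /\ ~ U n c2.

Section mutually_singular.
Context {d} {C : measurableType d} {R : realType}.
Variables mu1 mu2 : {measure set C -> \bar R}.
Local Open Scope ereal_scope.

Lemma mutually_singular_summable (T : (set C)^nat) :
  (forall k, measurable (T k)) ->
  \sum_(k <oo) mu1 (~` T k) < +oo -> \sum_(k <oo) mu2 (T k) < +oo ->
  mutually_singular mu1 mu2.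
Proof.
move=> mT sum1 sum2; have mTC k : measurable (~` T k) by exact: measurableC.
exists (lim_sup_set (fun k => ~` T k)); split.
- exact: measurable_lim_sup_set.
- exact: lim_sup_set_cvg0.
- apply/eqP; rewrite -measure_le0 -(lim_sup_set_cvg0 mT sum2).
  apply: le_measure; rewrite ?inE; last exact: setC_lim_sup_setC.
  + exact/measurableC/measurable_lim_sup_set.
  + exact: measurable_lim_sup_set.
Qed.

Lemma mutually_singular_approx :
  approx_singular mu1 mu2 -> mutually_singular mu1 mu2.
Proof.
pose eps k : R := (1 / (2 ^ k.+1)%:R)%R.
have eps_gt0 k : (0 < eps k)%R by rewrite divr_gt0 // ltr0n expn_gt0.
have summable (u : (\bar R)^nat) : (forall k, 0 <= u k) ->
    (forall k, u k <= (eps k)%:E) -> \sum_(k <oo) u k < +oo.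
  move=> u0 ueps; apply: (le_lt_trans _ (ltry 1)).
  apply: le_trans (epsilon_trick0 xpredT ler01).
  exact: lee_nneseries.
move=> approx; have /choice[T HT] := fun k => approx _ (eps_gt0 k).
apply: (@mutually_singular_summable T) => [k||]; first by case: (HT k).
- by apply: summable => k; [exact: measure_ge0 | case: (HT k)].
- by apply: summable => k; [exact: measure_ge0 | case: (HT k)].
Qed.

End mutually_singular.

Section ae_measure.
Context {d} {B : measurableType d} {R : realType}.
Variable mu : {measure set B -> \bar R}.
Local Open Scope ereal_scope.

Lemma le_measure_ae (X Y : set B) : measurable X -> measurable Y ->
  {ae mu, forall x, X x -> Y x} -> mu X <= mu Y.
Proof.
move=> mX mY [N [mN N0 XY_N]]; apply: (@le_trans _ _ (mu (Y `|` N))).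
  apply: le_measure; rewrite ?inE; [exact: mX | exact: measurableU |].
  move=> x Xx; have [Yx|nYx] := pselect (Y x); [by left | right].
  by apply: XY_N => /(_ Xx).
by rewrite (le_trans (measureU2 _ mY mN)) // [X in _ + X](_ : _ = 0) ?adde0.
Qed.

Lemma ae_equivariant_preimage_le {dC} {C : measurableType dC}
    {fB : B -> B} {fC : C -> C} {p : B -> C} {X : set C} :
  measurable_fun [set: B] fB -> measurable_fun [set: C] fC ->
  measurable_fun [set: B] p -> measurable X ->
  {ae mu, forall x, p (fB x) = fC (p x)} ->
  mu (p @^-1` (fC @^-1` X)) <= mu (fB @^-1` (p @^-1` X)).
Proof.
move=> mfB mfC mp mX equiv.
apply: le_measure_ae; do ?apply: measurable_preimageT => //.
by apply: filterS equiv => x /= ->.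
Qed.

End ae_measure.

Section strongly_almost_transitive.
Context {R : realType} {G : Type} {dB} {B : measurableType dB}
  {dC} {C : measurableType dC}.
Context {nu : probability B R} {actB : G -> B -> B} {actC : G -> C -> C}.
Hypotheses (mactB : measurable_action actB) (mactC : measurable_action actC).
Hypothesis sat : strongly_almost_transitive nu actB.
Local Open Scope ereal_scope.

Lemma sat_preimage_almost_full {A : set B} {e : R} :
  measurable A -> 0 < nu A -> (0 < e)%R ->
  exists g, nu (~` (actB g @^-1` A)) <= e%:E.
Proof.
move=> mA A_gt0 e_gt0.
have [u /fine_cvgP[fin_u /cvgrPdist_lt near_u]] := sat A mA A_gt0.
have [N _ /(_ N (leqnn N))[fin_N dist_N]] : \forall n \near \oo,
    nu (actB (u n) @^-1` A) \is a fin_num /\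
    (`|1 - fine (nu (actB (u n) @^-1` A))| < e)%R.
  by near=> n; split; near: n; [exact: fin_u | exact: near_u].
exists (u N); rewrite probability_setC; last exact: measurable_preimageT.
rewrite -(fineK fin_N) -EFinB lee_fin.
exact/ltW/(le_lt_trans (ler_norm _) dist_N).
Unshelve. all: by end_near. Qed.

Lemma sat_approx_singular {p1 p2 : B -> C} {U : set C} :
  measurable_fun [set: B] p1 -> measurable_fun [set: B] p2 ->
  (forall g, {ae nu, forall x, p1 (actB g x) = actC g (p1 x)}) ->
  (forall g, {ae nu, forall x, p2 (actB g x) = actC g (p2 x)}) ->
  measurable U -> 0 < nu (p1 @^-1` U `&` p2 @^-1` ~` U) ->
  approx_singular (pushforward nu p1) (pushforward nu p2).
Proof.
move=> mp1 mp2 equiv1 equiv2 mU A_gt0 e e_gt0; set A := _ `&` _ in A_gt0.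
have mA : measurable A.
  by apply: measurableI; apply: measurable_preimageT => //; exact: measurableC.
have [g Ag_large] := sat_preimage_almost_full mA A_gt0 e_gt0.
have outside_small (Y : set B) : measurable Y -> Y `<=` ~` A ->
    nu (actB g @^-1` Y) <= e%:E.
  move=> mY YA; apply: le_trans Ag_large; apply: le_measure; rewrite ?inE.
  - exact: measurable_preimageT.
  - exact/measurableC/measurable_preimageT.
  - by move=> x /YA.
exists (actC g @^-1` U); split.
- exact: measurable_preimageT.
- rewrite /pushforward -[~` _]preimage_setC.
  apply: le_trans (ae_equivariant_preimage_le nu (mactB g) (mactC g) mp1
    (measurableC mU) (equiv1 g)) _.
  apply: outside_small; first exact/measurable_preimageT/measurableC.
  by move=> x nU1 [].
- apply: le_trans (ae_equivariant_preimage_le nu (mactB g) (mactC g) mp2 mU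
    (equiv2 g)) _.
  apply: outside_small; first exact: measurable_preimageT.
  by move=> x U2 [_ /(_ U2)].
Qed.

End strongly_almost_transitive.

Lemma injective_measurable_separating {d} {C : measurableType d} {R : realType}
    {f : C -> R} : measurable_fun [set: C] f -> injective f ->
  exists U : (set C)^nat, (forall n, measurable (U n)) /\ separating U.
Proof.
move=> mf f_inj.
pose U n := let: (q, below) := odflt (0, true) (unpickle n) in
  f @^-1` (if below then `]-oo, ratr q[%classic else `]ratr q, +oo[%classic).
exists U; split=> [n|c1 c2 c12].
  by rewrite /U; case: (odflt _ _) => q [];
    apply: measurable_preimageT mf _; exact: measurable_itv.
have : f c1 != f c2 by apply/eqP => /f_inj.
case: ltgtP => // f12 _; have [q] := rat_in_itvoo f12;
  rewrite in_itv /= => /andP[lt1 lt2].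
- exists (pickle (q, true)); rewrite /U pickleK /= !in_itv /= lt1.
  by split => // /lt_trans/(_ lt2); rewrite ltxx.
- exists (pickle (q, false)); rewrite /U pickleK /= !in_itv /= lt2 !andbT.
  by split => // /lt_trans/(_ lt1); rewrite ltxx.
Qed.

Lemma ae_eq_separating {d} {B : measurableType d} {dC} {C : measurableType dC}
    {R : realType} (mu : {measure set B -> \bar R}) {p1 p2 : B -> C}
    {U : (set C)^nat} :
  separating U ->
  (forall n, mu.-negligible (p1 @^-1` U n `&` p2 @^-1` ~` U n)) ->
  {ae mu, forall x, p1 x = p2 x}.
Proof.
move=> sepU null; apply: negligibleS (negligible_bigcup null) => x /= p12.
by have [n [U1 nU2]] := sepU _ _ p12; exists n.
Qed.

Theorem lemma7p2 (R : realType)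
  (G : Type) (mul : G -> G -> G) (one : G) (inv : G -> G)
  (dB : measure_display) (B : measurableType dB) (nu : probability B R)
  (dC : measure_display) (C : measurableType dC)
  (actB : G -> B -> B) (actC : G -> C -> C)
  (pi1 pi2 : B -> C) :
  is_group mul one inv ->
  standard_borel R B ->
  is_action mul one actB -> measurable_action actB ->
  measure_class_preserving nu actB ->
  strongly_almost_transitive nu actB ->
  standard_borel R C ->
  is_action mul one actC -> measurable_action actC ->
  measurable_fun [set: B] pi1 -> measurable_fun [set: B] pi2 ->
  (forall g, {ae nu, forall x, pi1 (actB g x) = actC g (pi1 x)}) ->
  (forall g, {ae nu, forall x, pi2 (actB g x) = actC g (pi2 x)}) ->
  {ae nu, forall x, pi1 x = pi2 x} \/
  mutually_singular (pushforward nu pi1) (pushforward nu pi2).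
Proof.
move=> _ _ _ mactB _ sat [f [mf f_inj _ _]] _ mactC mp1 mp2 equiv1 equiv2.
have [U [mU sepU]] := injective_measurable_separating mf f_inj.
pose A n := pi1 @^-1` U n `&` pi2 @^-1` ~` U n.
have mA n : measurable (A n).
  by apply: measurableI; apply: measurable_preimageT => //; exact: measurableC.
have [[n A_gt0]|A_null] := pselect (exists n, (0 < nu (A n))%E).
  right; apply: mutually_singular_approx.
  exact: (sat_approx_singular mactB mactC sat mp1 mp2 equiv1 equiv2 (mU n)).
left; apply: (ae_eq_separating nu sepU) => n.
apply/negligibleP; first exact: mA.
apply/eqP; rewrite -measure_le0 leNgt; apply/negP => A_gt0.
by apply: A_null; exists n.
Qed.
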